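(* Let $c\in\mathbb{R}[t]$ be a polynomial of degree one, let $P,D\in\mathbb{H}[t]$ with $P\neq 0$, and let $M=c^2P+\varepsilon D\in\mathbb{DH}[t]$ be reduced, i.e. there is no $r\in\mathbb{R}[t]$ of positive degree and $M'\in\mathbb{DH}[t]$ with $M=rM'$. Then $M$ cannot be written as a product of polynomials of degree one in $\mathbb{DH}[t]$.
   Context: $\mathbb{D}=\mathbb{R}[\varepsilon]/\langle\varepsilon^2\rangle$ denotes the dual numbers. $\mathbb{H}$ denotes the real quaternions with basis $1,\mathbf{i},\mathbf{j},\mathbf{k}$, $\mathbf{i}^2=\mathbf{j}^2=\mathbf{k}^2=\mathbf{i}\mathbf{j}\mathbf{k}=-1$. The dual quaternions $\mathbb{DH}$ are $\mathbb{H}\otimes_{\mathbb{R}}\mathbb{D}$ ($\varepsilon$ central, $\varepsilon^2=0$). $\mathbb{DH}[t]$ is the polynomial ring with dual quaternion coefficients in which $t$ commutes with all coefficients; every element is $P+\varepsilon D$ with $P,D\in\mathbb{H}[t]$ (primal and dual part). *)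

From HB Require Import structures.
From mathcomp Require Import all_boot all_order all_algebra.
From mathcomp Require Import reals.
Set Implicit Arguments. Unset Strict Implicit. Unset Printing Implicit Defensive.
Import Order.TTheory GRing.Theory Num.Theory.
Local Open Scope ring_scope.

(* Quaternions with coefficients in a commutative ring A:
   a0 + a1 i + a2 j + a3 k.  Since t is central in H[t],
   H[t] = quat {poly R} (quaternions over the commutative ring R[t]). *)
Record quat (A : Type) := Quat { q0 : A; q1 : A; q2 : A; q3 : A }.

Section Quat.
Variable A : comNzRingType.

Definition qzero : quat A := Quat 0 0 0 0.
Definition qone : quat A := Quat 1 0 0 0.
Definition qadd (a b : quat A) : quat A :=
  Quat (q0 a + q0 b) (q1 a + q1 b) (q2 a + q2 b) (q3 a + q3 b).
(* Hamilton product: i^2 = j^2 = k^2 = ijk = -1 *)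
Definition qmul (a b : quat A) : quat A :=
  Quat (q0 a * q0 b - q1 a * q1 b - q2 a * q2 b - q3 a * q3 b)
       (q0 a * q1 b + q1 a * q0 b + q2 a * q3 b - q3 a * q2 b)
       (q0 a * q2 b - q1 a * q3 b + q2 a * q0 b + q3 a * q1 b)
       (q0 a * q3 b + q1 a * q2 b - q2 a * q1 b + q3 a * q0 b).
Definition qscale (r : A) (a : quat A) : quat A :=
  Quat (r * q0 a) (r * q1 a) (r * q2 a) (r * q3 a).
End Quat.

(* Dual quaternion polynomials DH[t]: elements P + eps D with P, D in H[t]. *)
Record dqpoly (R : realType) := DQ { primal : quat {poly R}; dual : quat {poly R} }.

Section DQ.
Variable R : realType.

Definition dqone : dqpoly R := DQ (qone _) (qzero _).
(* (P1 + eps D1)(P2 + eps D2) = P1 P2 + eps (P1 D2 + D1 P2) *)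
Definition dqmul (M N : dqpoly R) : dqpoly R :=
  DQ (qmul (primal M) (primal N))
     (qadd (qmul (primal M) (dual N)) (qmul (dual M) (primal N))).
Definition dqscale (r : {poly R}) (M : dqpoly R) : dqpoly R :=
  DQ (qscale r (primal M)) (qscale r (dual M)).
Definition dqprod (fs : seq (dqpoly R)) : dqpoly R := foldr dqmul dqone fs.

Definition quat_size (a : quat {poly R}) : nat :=
  maxn (maxn (size (q0 a)) (size (q1 a))) (maxn (size (q2 a)) (size (q3 a))).
Definition dq_deg (M : dqpoly R) : nat :=
  (maxn (quat_size (primal M)) (quat_size (dual M))).-1.

Definition dq_reduced (M : dqpoly R) : Prop :=
  ~ exists (r : {poly R}) (M' : dqpoly R), (1 < size r)%N /\ M = dqscale r M'.
End DQ.

From HB Require Import structures.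
From mathcomp Require Import all_boot all_order all_algebra.
From mathcomp Require Import reals.
From mathcomp Require Import ring zify.
Set Implicit Arguments. Unset Strict Implicit. Unset Printing Implicit Defensive.
Import Order.TTheory GRing.Theory Num.Theory.
Local Open Scope ring_scope.

(* Let x be the real root of the linear polynomial c and let
   M = c^2 P + eps D = F_1 ... F_n be a factorization into linear factors.
   Evaluating the primal parts at x (a ring morphism H[t] -> H), let k be the
   number of factors whose primal part vanishes at x.
   - k = 0: H has no zero divisors (its norm is multiplicative), so the primal
     part of the product does not vanish at x, whereas c^2 P does.
   - k = 1: by the Leibniz rule the derivative of the primal part of the
     product at x is F'(x) times a nonzero quaternion, where F is the unique
     vanishing factor; F'(x) <> 0 since a nonzero linear polynomial cannot
     vanish at x together with its derivative.  But (c^2 P)' vanishes at x.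
   - k >= 2: every term of the dual part of the product contains a vanishing
     primal factor, so primal and dual parts vanish at x, and t - x divides M,
     contradicting reducedness. *)

Section QuatRing.
Variable A : comNzRingType.

Lemma qmul0q (a : quat A) : qmul (qzero A) a = qzero A.
Proof. rewrite /qmul /qzero /=; congr Quat; ring. Qed.

Lemma qmulq0 (a : quat A) : qmul a (qzero A) = qzero A.
Proof. rewrite /qmul /qzero /=; congr Quat; ring. Qed.

Lemma qadd0q (a : quat A) : qadd (qzero A) a = a.
Proof. by case: a => *; rewrite /qadd /= !add0r. Qed.

Lemma qaddq0 (a : quat A) : qadd a (qzero A) = a.
Proof. by case: a => *; rewrite /qadd /= !addr0. Qed.

Lemma qone_neq0 : qone A <> qzero A.
Proof. by case=> /eqP; rewrite oner_eq0. Qed.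

Definition qzerob (a : quat A) : bool :=
  [&& q0 a == 0, q1 a == 0, q2 a == 0 & q3 a == 0].

Lemma qzerobP (a : quat A) : reflect (a = qzero A) (qzerob a).
Proof.
case: a => a0 a1 a2 a3; apply: (iffP and4P) => /=.
  by case=> /eqP-> /eqP-> /eqP-> /eqP->.
by case=> -> -> -> ->.
Qed.

End QuatRing.

Lemma qscale_neq0 (A : idomainType) (r : A) (a : quat A) :
  r != 0 -> a <> qzero A -> qscale r a <> qzero A.
Proof.
case: a => a0 a1 a2 a3 /negbTE r_nz a_nz; rewrite /qscale /=.
case=> /eqP + /eqP + /eqP + /eqP; rewrite !mulf_eq0 r_nz /=.
by move=> /eqP e0 /eqP e1 /eqP e2 /eqP e3; apply: a_nz; rewrite e0 e1 e2 e3.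
Qed.

(* Over a real domain the quaternions have no zero divisors, because the norm
   a0^2 + a1^2 + a2^2 + a3^2 is multiplicative and vanishes only at 0. *)
Section QuatNorm.
Variable R : realDomainType.

Definition qnorm (a : quat R) : R := q0 a ^+ 2 + q1 a ^+ 2 + q2 a ^+ 2 + q3 a ^+ 2.

Lemma qnorm_mul (a b : quat R) : qnorm (qmul a b) = qnorm a * qnorm b.
Proof. case: a => a0 a1 a2 a3; case: b => b0 b1 b2 b3; rewrite /qnorm /=; ring. Qed.

Lemma qnorm_eq0 (a : quat R) : qnorm a = 0 -> a = qzero R.
Proof.
case: a => a0 a1 a2 a3; rewrite /qnorm /= => /eqP.
rewrite !paddr_eq0 ?addr_ge0 ?sqr_ge0 // !sqrf_eq0.
by case/andP=> /andP[/andP[/eqP-> /eqP->] /eqP->] /eqP->.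
Qed.

Lemma qmul_eq0 (a b : quat R) : qmul a b = qzero R -> a = qzero R \/ b = qzero R.
Proof.
move=> ab0; have : qnorm (qmul a b) = 0 by rewrite ab0 /qnorm /= expr0n /= !addr0.
rewrite qnorm_mul => /eqP; rewrite mulf_eq0.
by case/orP=> /eqP/qnorm_eq0; [left | right].
Qed.

End QuatNorm.

Lemma poly_size_le2 (A : nzRingType) (p : {poly A}) :
  (size p <= 2)%N -> p = (p`_0)%:P + (p`_1)%:P * 'X.
Proof.
move=> p2; apply/polyP => i; rewrite coefD coefC mul_polyC coefZ coefX.
case: i => [|[|i]] /=; rewrite ?mulr1 ?mulr0 ?addr0 ?add0r //.
by rewrite nth_default //; apply: leq_trans p2 _.
Qed.

Section QuatPoly.
Variables (A : comNzRingType) (x : A).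

Definition qev (a : quat {poly A}) : quat A :=
  Quat (q0 a).[x] (q1 a).[x] (q2 a).[x] (q3 a).[x].

Definition qder (a : quat {poly A}) : quat {poly A} :=
  Quat (q0 a)^`() (q1 a)^`() (q2 a)^`() (q3 a)^`().

Lemma qev_mul (a b : quat {poly A}) : qev (qmul a b) = qmul (qev a) (qev b).
Proof. by rewrite /qev /= !(hornerD, hornerN, hornerM). Qed.

Lemma qev_add (a b : quat {poly A}) : qev (qadd a b) = qadd (qev a) (qev b).
Proof. by rewrite /qev /= !hornerD. Qed.

Lemma qev_one : qev (qone _) = qone A.
Proof. by rewrite /qev /= !hornerC. Qed.

Lemma qder_mul (a b : quat {poly A}) :
  qder (qmul a b) = qadd (qmul (qder a) b) (qmul a (qder b)).
Proof. rewrite /qder /qadd /= !(derivD, derivN, derivM); congr Quat; ring. Qed.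

Lemma linear_poly_eq0 (p : {poly A}) :
  (size p <= 2)%N -> p.[x] = 0 -> (p^`()).[x] = 0 -> p = 0.
Proof.
move=> p2; rewrite (poly_size_le2 p2).
rewrite derivD derivC derivM derivC derivX mul0r add0r mulr1.
rewrite !(hornerD, hornerC, hornerM, hornerX) add0r => p_x b0.
by move: p_x; rewrite b0 mul0r addr0 => ->; rewrite !mul0r addr0.
Qed.

Definition qlinear (a : quat {poly A}) : Prop :=
  [/\ (size (q0 a) <= 2)%N, (size (q1 a) <= 2)%N,
      (size (q2 a) <= 2)%N & (size (q3 a) <= 2)%N].

Lemma qlinear_qder_neq0 (a : quat {poly A}) :
  qlinear a -> a <> qzero _ -> qev a = qzero A -> qev (qder a) <> qzero A.
Proof.
case: a => a0 a1 a2 a3 [/= s0 s1 s2 s3] a_nz; rewrite /qev /=.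
case=> e0 e1 e2 e3 [f0 f1 f2 f3]; apply: a_nz.
by rewrite (linear_poly_eq0 s0) // (linear_poly_eq0 s1) //
           (linear_poly_eq0 s2) // (linear_poly_eq0 s3).
Qed.

Lemma qev_eq0_factor (a : quat {poly A}) :
  qev a = qzero A -> exists a', a = qscale ('X - x%:P) a'.
Proof.
have factor (p : {poly A}) : p.[x] = 0 -> exists q, p = ('X - x%:P) * q.
  by move=> /eqP/factor_theorem[q ->]; exists q; rewrite mulrC.
case: a => a0 a1 a2 a3; rewrite /qev /=.
case=> /factor[p0 ->] /factor[p1 ->] /factor[p2 ->] /factor[p3 ->].
by exists (Quat p0 p1 p2 p3).
Qed.

Lemma qscale_sqr_root (c : {poly A}) (a : quat {poly A}) : c.[x] = 0 ->
  qev (qscale (c ^+ 2) a) = qzero A /\ qev (qder (qscale (c ^+ 2) a)) = qzero A.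
Proof.
move=> c_x.
have sqr_root (p : {poly A}) : (c ^+ 2 * p).[x] = 0 /\ ((c ^+ 2 * p)^`()).[x] = 0.
  by rewrite derivM expr2 derivM !(hornerD, hornerM) c_x !(mul0r, mulr0, add0r).
case: a => p0 p1 p2 p3; rewrite /qev /qder /qscale /=.
have [v0 d0] := sqr_root p0; have [v1 d1] := sqr_root p1.
have [v2 d2] := sqr_root p2; have [v3 d3] := sqr_root p3.
by split; congr Quat.
Qed.

End QuatPoly.

Lemma size2_has_root (F : fieldType) (c : {poly F}) : size c = 2%N -> exists x, root c x.
Proof.
move=> c2; have c1_nz : c`_1 != 0.
  by move: (lead_coef_eq0 c); rewrite lead_coefE c2 -size_poly_eq0 c2 => ->.
exists (- c`_0 / c`_1); rewrite rootE {1}(poly_size_le2 (eq_leq c2)).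
by rewrite !(hornerD, hornerM, hornerC, hornerX) mulrCA divff // mulr1 addrN.
Qed.

Section VanishingFactors.
Variables (R : realType) (x : R).

Definition vanishing_count (fs : seq (dqpoly R)) : nat :=
  count (fun F => qzerob (qev x (primal F))) fs.

(* One vanishing factor kills the primal part of the product, two kill the
   dual part too, since each term of the dual part misses only one factor. *)
Lemma dqprod_vanishes (fs : seq (dqpoly R)) :
  ((1 <= vanishing_count fs)%N -> qev x (primal (dqprod fs)) = qzero R) /\
  ((2 <= vanishing_count fs)%N -> qev x (dual (dqprod fs)) = qzero R).
Proof.
elim: fs => [|F fs [IH1 IH2]] //=.
rewrite /vanishing_count /= -/(vanishing_count fs) qev_mul qev_add !qev_mul.
case: qzerobP => [-> | _] /=.
  by rewrite !qmul0q; split=> // k2; rewrite IH1 // qmulq0 qadd0q.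
rewrite add0n; split=> k; first by rewrite IH1 // qmulq0.
by rewrite IH1 ?(leq_trans _ k) // IH2 // !qmulq0 qadd0q.
Qed.

Lemma dqprod_nonvanishing (fs : seq (dqpoly R)) :
  vanishing_count fs = 0%N -> qev x (primal (dqprod fs)) <> qzero R.
Proof.
elim: fs => [|F fs IH] /=; first by rewrite qev_one => _; apply: qone_neq0.
rewrite /vanishing_count /= -/(vanishing_count fs).
case: qzerobP => //= F_nz /IH fs_nz; rewrite qev_mul.
by case/qmul_eq0.
Qed.

Definition linear_factor (F : dqpoly R) : Prop :=
  primal F <> qzero _ /\ qlinear (primal F).

Lemma dqprod_simple_root (fs : seq (dqpoly R)) :
  (forall i, (i < size fs)%N -> linear_factor (nth (dqone R) fs i)) ->
  vanishing_count fs = 1%N -> qev x (qder (primal (dqprod fs))) <> qzero R.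
Proof.
elim: fs => [|F fs IH] //= fs_lin; have [F_nz F_lin] := fs_lin 0%N isT.
rewrite /vanishing_count /= -/(vanishing_count fs) qder_mul qev_add !qev_mul.
case: qzerobP => /= [F_x [k0] | F_x]; last rewrite add0n => k1.
  rewrite F_x qmul0q qaddq0 => /qmul_eq0[].
    exact: qlinear_qder_neq0.
  exact: dqprod_nonvanishing.
rewrite (proj1 (dqprod_vanishes fs)) ?k1 // qmulq0 qadd0q.
by case/qmul_eq0 => //; apply: IH => // i; apply: (fs_lin i.+1).
Qed.

End VanishingFactors.

Lemma dq_deg1_qlinear (R : realType) (F : dqpoly R) :
  dq_deg F = 1%N -> qlinear (primal F).
Proof.
rewrite /dq_deg => F1; have : (quat_size (primal F) <= 2)%N by lia.
by rewrite /quat_size !geq_max => /andP[/andP[s0 s1] /andP[s2 s3]].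
Qed.

Lemma dqprod_primal_neq0 (R : realType) (fs : seq (dqpoly R)) :
  primal (dqprod fs) <> qzero _ ->
  forall i, (i < size fs)%N -> primal (nth (dqone R) fs i) <> qzero _.
Proof.
elim: fs => [|F fs IH] // prod_nz [_ F0 | i i_lt].
  by apply: prod_nz; rewrite /= F0 qmul0q.
by apply: IH i_lt => fs0; apply: prod_nz; rewrite /= -/(dqprod fs) fs0 qmulq0.
Qed.

Theorem mainTheorem6 (R : realType) (c : {poly R}) (P D : quat {poly R}) :
  size c = 2%N ->
  P <> qzero _ ->
  dq_reduced (DQ (qscale (c ^+ 2) P) D) ->
  ~ exists fs : seq (dqpoly R),
      (forall i, (i < size fs)%N -> dq_deg (nth (dqone R) fs i) = 1%N) /\
      dqprod fs = DQ (qscale (c ^+ 2) P) D.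
Proof.
move=> c2 P_nz reduced [fs [fs_deg1 fs_prod]].
have [x /eqP c_x] := size2_has_root c2.
have [M_x M'_x] := qscale_sqr_root P c_x.
have c_nz : c ^+ 2 != 0 by rewrite expf_neq0 // -size_poly_eq0 c2.
have prim_nz : primal (dqprod fs) <> qzero _.
  by rewrite fs_prod; apply: qscale_neq0.
have fs_lin i : (i < size fs)%N -> linear_factor (nth (dqone R) fs i).
  by move=> i_lt; split; [apply: dqprod_primal_neq0 | apply/dq_deg1_qlinear/fs_deg1].
case k: (vanishing_count x fs) => [|[|k']].
- by apply: (dqprod_nonvanishing k); rewrite fs_prod.
- by apply: (dqprod_simple_root fs_lin k); rewrite fs_prod.
- have := proj2 (dqprod_vanishes x fs); rewrite k fs_prod => /(_ isT) /= D_x.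
  apply: reduced; have [P' ->] := qev_eq0_factor M_x; have [D' ->] := qev_eq0_factor D_x.
  by exists ('X - x%:P), (DQ P' D'); rewrite size_XsubC.
Qed.
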